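(* Let $L>0,\alpha>0$. There exists a constant $F>0$ such that for any $\lambda\ge0$ and any $b\in\Lambda(\alpha)$, the principal eigenfunction $\psi\in E_L$ of $-L_{\lambda,b}$ satisfies $\max\psi/\min\psi\le F$.
   Context: $\Lambda(\alpha)$: $b\in C^1(\mathbb R)$, $b\ge0$, $L$-periodic, $\int_0^Lb=\alpha L$. $E_L$ is the set of positive $L$-periodic functions in $H^1_{loc}(\mathbb R)$. $-L_{\lambda,b}\psi=-\psi''+2\lambda\psi'-b\psi$ on $L$-periodic functions; its principal eigenfunction is a positive $L$-periodic $\psi$ with $-L_{\lambda,b}\psi=\mu(\lambda,b)\psi$ for the principal eigenvalue $\mu(\lambda,b)$. *)

From Stdlib Require Import Reals.
From Coquelicot Require Import Coquelicot.
Open Scope R_scope.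

Definition periodic (L : R) (f : R -> R) : Prop := forall x, f (x + L) = f x.

Definition C1 (f : R -> R) : Prop :=
  (forall x, ex_derive f x) /\ (forall x, continuous (Derive f) x).

Definition Lambda (L alpha : R) (b : R -> R) : Prop :=
  C1 b /\ (forall x, 0 <= b x) /\ periodic L b /\ RInt b 0 L = alpha * L.

Definition minus_L (lam : R) (b psi : R -> R) (x : R) : R :=
  - Derive (Derive psi) x + 2 * lam * Derive psi x - b x * psi x.

(* psi is a principal eigenfunction of -L_{lambda,b} on L-periodic functions:
   a positive L-periodic (classical, C^2) function psi with
   -L_{lambda,b} psi = mu psi for some mu (necessarily the principal
   eigenvalue mu(lambda,b), the only periodic eigenvalue with a positive
   eigenfunction). *)
Definition principal_eigenfunction (L lam : R) (b psi : R -> R) : Prop :=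
  (forall x, 0 < psi x) /\ periodic L psi /\
  (forall x, ex_derive psi x) /\ (forall x, ex_derive (Derive psi) x) /\
  exists mu : R, forall x, minus_L lam b psi x = mu * psi x.

From Stdlib Require Import Reals Lra ZArith.
From Coquelicot Require Import Coquelicot.
Open Scope R_scope.

(* With [v = psi' / psi] the eigenvalue equation becomes the Riccati equation
   [v' = q v - b], where [q t = 2 lam t - mu - t^2] is concave.  At the extrema
   of [v] one has [q v = b >= 0], hence [q v >= 0] everywhere by concavity, so
   [v + RInt b 0] is nondecreasing and the oscillation of [v] is at most
   [RInt b 0 L = alpha L].  As [v] vanishes at a maximum of [psi], [v >= - alpha L],
   and integrating [(ln psi)' = v] over at most one period gives
   [max psi / min psi <= exp (alpha L^2)], uniformly in [lam] and [b]. *)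

Lemma continuous_of_ex_derive (f : R -> R) x : ex_derive f x -> continuous f x.
Proof. exact (ex_derive_continuous (K := R_AbsRing) (V := R_NormedModule) f x). Qed.

Lemma continuity_pt_of_ex_derive (f : R -> R) x : ex_derive f x -> continuity_pt f x.
Proof. intro H. apply continuity_pt_filterlim, continuous_of_ex_derive, H. Qed.

Lemma MVT_is_derive (g dg : R -> R) a c : (forall x, is_derive g x (dg x)) ->
  exists z, Rmin a c <= z <= Rmax a c /\ g c - g a = dg z * (c - a).
Proof.
  intro Hg. apply MVT_gen; intros x _; [apply Hg|].
  apply continuity_pt_of_ex_derive. exists (dg x). apply Hg.
Qed.

Lemma nondecreasing_of_is_derive_ge0 (g dg : R -> R) :
  (forall x, is_derive g x (dg x)) -> (forall x, 0 <= dg x) ->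
  forall a c, a <= c -> g a <= g c.
Proof.
  intros Hg Hdg a c Hac.
  destruct (MVT_is_derive g dg a c Hg) as [z [_ E]].
  assert (0 <= dg z * (c - a)) by (apply Rmult_le_pos; [apply Hdg | lra]). lra.
Qed.

Lemma constant_of_is_derive_0 (g : R -> R) :
  (forall x, is_derive g x 0) -> forall a c, g a = g c.
Proof.
  intros Hg a c. destruct (MVT_is_derive g (fun _ => 0) a c Hg) as [z [_ E]]. lra.
Qed.

Lemma is_derive_max_eq0 (f : R -> R) x0 d :
  is_derive f x0 d -> (forall x, f x <= f x0) -> d = 0.
Proof.
  intros Hd Hmax. apply is_derive_Reals in Hd.
  exact (deriv_maximum f (x0 - 1) (x0 + 1) x0 (exist _ d Hd)
           ltac:(lra) ltac:(lra) (fun x _ _ => Hmax x)).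
Qed.

Lemma is_derive_min_eq0 (f : R -> R) x0 d :
  is_derive f x0 d -> (forall x, f x0 <= f x) -> d = 0.
Proof.
  intros Hd Hmin. enough (- d = 0) by lra.
  apply (is_derive_max_eq0 (fun x => - f x) x0); [exact (is_derive_opp f x0 d Hd)|].
  intro x. specialize (Hmin x). lra.
Qed.

Lemma is_derive_shift (f : R -> R) (df : R) x L :
  is_derive f (x + L) df -> is_derive (fun t => f (t + L)) x df.
Proof.
  intro Hf.
  assert (Hshift : is_derive (fun t : R => t + L) x 1) by (auto_derive; auto; ring).
  assert (H := is_derive_comp f (fun t => t + L) x df 1 Hf Hshift).
  rewrite <- (Rmult_1_l df). exact H.
Qed.

Section Periodic.
Variables (L : R) (f : R -> R).
Hypothesis Hper : periodic L f.

Lemma periodic_INR n x : f (x + INR n * L) = f x.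
Proof.
  revert x. induction n as [|n IH]; intro x.
  - simpl. f_equal. ring.
  - rewrite S_INR, <- (IH x), <- (Hper (x + INR n * L)). f_equal. ring.
Qed.

Lemma periodic_IZR k x : f (x + IZR k * L) = f x.
Proof.
  destruct k as [|p|p]; simpl.
  - f_equal. ring.
  - rewrite <- positive_nat_Z, <- INR_IZR_INZ. apply periodic_INR.
  - rewrite <- Pos2Z.opp_pos, <- positive_nat_Z, opp_IZR, <- INR_IZR_INZ.
    rewrite <- (periodic_INR (Pos.to_nat p) (x + - INR (Pos.to_nat p) * L)).
    f_equal. ring.
Qed.

Hypothesis HL : 0 < L.

Lemma periodic_representative a x : exists x', a <= x' <= a + L /\ f x' = f x.
Proof.
  destruct (archimed ((x - a) / L)) as [Hup1 Hup2].
  exists (x + IZR (1 - up ((x - a) / L)) * L). split; [|apply periodic_IZR].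
  rewrite minus_IZR.
  set (r := (x - a) / L - IZR (up ((x - a) / L)) + 1).
  assert (E : x + (1 - IZR (up ((x - a) / L))) * L = a + L * r)
    by (unfold r; field; lra).
  assert (0 <= r <= 1) by (unfold r; lra).
  rewrite E. nra.
Qed.

Hypothesis Hf : forall x, ex_derive f x.

Lemma periodic_max : exists x0, forall x, f x <= f x0.
Proof.
  destruct (continuity_ab_maj f 0 L) as [x0 [Hx0 _]];
    [lra | intros; apply continuity_pt_of_ex_derive, Hf |].
  exists x0. intro x. destruct (periodic_representative 0 x) as [x' [Hx' <-]].
  apply Hx0. lra.
Qed.

Lemma periodic_min : exists x0, forall x, f x0 <= f x.
Proof.
  destruct (continuity_ab_min f 0 L) as [x0 [Hx0 _]];
    [lra | intros; apply continuity_pt_of_ex_derive, Hf |].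
  exists x0. intro x. destruct (periodic_representative 0 x) as [x' [Hx' <-]].
  apply Hx0. lra.
Qed.

End Periodic.

Lemma periodic_Derive L (f : R -> R) : periodic L f -> periodic L (Derive f).
Proof.
  intros Hper x. unfold Derive. f_equal. apply Lim_ext. intro h.
  replace (x + L + h) with (x + h + L) by ring. now rewrite (Hper x), (Hper (x + h)).
Qed.

Lemma is_derive_RInt_0 (b : R -> R) : (forall x, continuous b x) ->
  forall x, is_derive (RInt b 0) x (b x).
Proof.
  intros Hb x. apply (is_derive_RInt b (RInt b 0) 0 x); [|apply Hb].
  apply filter_forall. intro y. apply (RInt_correct (V := R_CompleteNormedModule)).
  apply (ex_RInt_continuous (V := R_CompleteNormedModule)). intros; apply Hb.
Qed.

Lemma RInt_periodic_shift L (b : R -> R) : periodic L b -> (forall x, continuous b x) ->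
  forall x, RInt b 0 (x + L) - RInt b 0 x = RInt b 0 L.
Proof.
  intros Hper Hb. assert (HB := is_derive_RInt_0 b Hb).
  assert (Hconst : forall x, is_derive (fun t => RInt b 0 (t + L) - RInt b 0 t) x 0).
  { intro x. rewrite <- (Rminus_diag (b x)), <- (Hper x) at 1.
    apply (is_derive_minus (fun t => RInt b 0 (t + L))); [apply is_derive_shift|]; apply HB. }
  intro x. rewrite (constant_of_is_derive_0 _ Hconst x 0), Rplus_0_l, RInt_point.
  apply Rminus_0_r.
Qed.

Lemma concave_quadratic_nonneg_between a c t1 t2 t :
  0 <= a * t1 - c - t1 ^ 2 -> 0 <= a * t2 - c - t2 ^ 2 -> t2 <= t <= t1 ->
  0 <= a * t - c - t ^ 2.
Proof.
  intros Hq1 Hq2 [Ht2 Ht1].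
  destruct (Req_dec t2 t1) as [<- | Hne]; [now replace t with t2 by lra|].
  apply (Rmult_le_reg_l (t1 - t2)); [lra|]. rewrite Rmult_0_r.
  (* Lagrange interpolation of the quadratic at [t2, t1], plus the concavity defect. *)
  replace ((t1 - t2) * (a * t - c - t ^ 2)) with
    ((t - t2) * (a * t1 - c - t1 ^ 2) + (t1 - t) * (a * t2 - c - t2 ^ 2)
     + (t1 - t2) * ((t - t2) * (t1 - t))) by ring.
  repeat apply Rplus_le_le_0_compat; repeat apply Rmult_le_pos; lra.
Qed.

Section Riccati.
Variables (L lam mu : R) (b v : R -> R).
Hypotheses (HL : 0 < L) (Hv_per : periodic L v) (Hb_nonneg : forall x, 0 <= b x).
Hypothesis Hv : forall x, is_derive v x (2 * lam * v x - mu - v x ^ 2 - b x).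

Lemma riccati_quadratic_nonneg x : 0 <= 2 * lam * v x - mu - v x ^ 2.
Proof.
  assert (Hv_ex : forall x, ex_derive v x) by (intro t; eexists; apply Hv).
  destruct (periodic_max L v Hv_per HL Hv_ex) as [x1 Hx1].
  destruct (periodic_min L v Hv_per HL Hv_ex) as [x2 Hx2].
  (* At an extremum of [v] the quadratic equals [b >= 0]. *)
  assert (Hq1 := is_derive_max_eq0 v x1 _ (Hv x1) Hx1).
  assert (Hq2 := is_derive_min_eq0 v x2 _ (Hv x2) Hx2).
  assert (Hb1 := Hb_nonneg x1). assert (Hb2 := Hb_nonneg x2).
  apply (concave_quadratic_nonneg_between _ _ (v x1) (v x2)); [lra | lra | auto].
Qed.

Hypotheses (Hb_per : periodic L b) (Hb_cont : forall x, continuous b x).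

(* [v + RInt b 0] is nondecreasing, its derivative being the quadratic above. *)
Lemma riccati_oscillation x y : v x - v y <= RInt b 0 L.
Proof.
  destruct (periodic_representative L v Hv_per HL x y) as [y' [Hy' <-]].
  assert (HB := is_derive_RInt_0 b Hb_cont).
  assert (Hg : forall t, is_derive (fun t => v t + RInt b 0 t) t
                                   (2 * lam * v t - mu - v t ^ 2)).
  { intro t. assert (H := is_derive_plus v (RInt b 0) t _ _ (Hv t) (HB t)).
    replace (plus _ (b t)) with (2 * lam * v t - mu - v t ^ 2) in H
      by (unfold plus; simpl; ring).
    exact H. }
  assert (Hmono := nondecreasing_of_is_derive_ge0 _ _ Hg riccati_quadratic_nonneg x y').
  assert (HBmono := nondecreasing_of_is_derive_ge0 _ _ HB Hb_nonneg y' (x + L)).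
  assert (Hshift := RInt_periodic_shift L b Hb_per Hb_cont x).
  simpl in Hmono. lra.
Qed.

End Riccati.

Lemma eigenfunction_log_derivative_riccati lam mu (b psi : R -> R) :
  (forall x, 0 < psi x) -> (forall x, ex_derive psi x) ->
  (forall x, ex_derive (Derive psi) x) ->
  (forall x, minus_L lam b psi x = mu * psi x) ->
  forall x, is_derive (fun t => Derive psi t / psi t) x
    (2 * lam * (Derive psi x / psi x) - mu - (Derive psi x / psi x) ^ 2 - b x).
Proof.
  intros Hpos Hd1 Hd2 Heig x.
  assert (Hpx := Hpos x).
  assert (H := is_derive_div (Derive psi) psi x _ _
                 (Derive_correct _ _ (Hd2 x)) (Derive_correct _ _ (Hd1 x)) ltac:(lra)).
  assert (E : Derive (Derive psi) x = 2 * lam * Derive psi x - b x * psi x - mu * psi x)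
    by (specialize (Heig x); unfold minus_L in Heig; lra).
  rewrite E in H. replace (_ - _ - _ - b x) with
    (((2 * lam * Derive psi x - b x * psi x - mu * psi x) * psi x
      - Derive psi x * Derive psi x) / psi x ^ 2) by (field; lra).
  exact H.
Qed.

Section LogDerivative.
Variables (L A : R) (psi : R -> R).
Hypotheses (HL : 0 < L) (Hper : periodic L psi) (Hpos : forall x, 0 < psi x)
  (Hd : forall x, ex_derive psi x).

Lemma log_derivative_ge_of_oscillation :
  (forall x y, Derive psi x / psi x - Derive psi y / psi y <= A) ->
  forall x, - A <= Derive psi x / psi x.
Proof.
  intros Hosc x.
  destruct (periodic_max L psi Hper HL Hd) as [xm Hxm].
  assert (H0 := is_derive_max_eq0 psi xm _ (Derive_correct _ _ (Hd xm)) Hxm).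
  specialize (Hosc xm x). rewrite H0, Rdiv_0_l in Hosc. lra.
Qed.

Lemma ratio_le_exp_of_log_derivative_ge :
  0 <= A -> (forall x, - A <= Derive psi x / psi x) ->
  forall x y, psi x / psi y <= exp (A * L).
Proof.
  intros HA Hv x y.
  destruct (periodic_representative L psi Hper HL x y) as [y' [Hy' <-]].
  assert (Hln : forall t, is_derive (fun t => ln (psi t)) t (Derive psi t / psi t)).
  { intro t. exact (is_derive_comp ln psi t _ _ (is_derive_ln _ (Hpos t))
                                                  (Derive_correct _ _ (Hd t))). }
  destruct (MVT_is_derive _ _ x y' Hln) as [z [_ E]].
  assert (Hlog : ln (psi x) - ln (psi y') <= A * L).
  { specialize (Hv z).
    assert (- A * (y' - x) <= Derive psi z / psi z * (y' - x))
      by (apply Rmult_le_compat_r; lra).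
    assert (A * (y' - x) <= A * L) by (apply Rmult_le_compat_l; lra).
    simpl in E. lra. }
  replace (psi x / psi y') with (exp (ln (psi x) - ln (psi y'))).
  - destruct (Rle_lt_or_eq_dec _ _ Hlog) as [Hlt | ->]; [left; apply exp_increasing, Hlt | lra].
  - unfold Rminus. rewrite exp_plus, exp_Ropp, !exp_ln by apply Hpos. reflexivity.
Qed.

End LogDerivative.

Theorem mainTheorem17 (L alpha : R) (HL : 0 < L) (Halpha : 0 < alpha) :
  exists F : R, 0 < F /\
    forall (lam : R) (b psi : R -> R),
      0 <= lam -> Lambda L alpha b -> principal_eigenfunction L lam b psi ->
      forall x y : R, psi x / psi y <= F.
Proof.
  exists (exp (alpha * L * L)). split; [apply exp_pos|].
  intros lam b psi _ [[Hb_deriv _] [Hb_nonneg [Hb_per Hb_int]]]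
    [Hpos [Hper [Hd1 [Hd2 [mu Heig]]]]].
  set (v := fun t => Derive psi t / psi t).
  assert (Hv := eigenfunction_log_derivative_riccati lam mu b psi Hpos Hd1 Hd2 Heig).
  assert (Hv_per : periodic L v)
    by (intro t; unfold v; now rewrite (periodic_Derive L psi Hper t), Hper).
  assert (Hb_cont : forall x, continuous b x)
    by (intro x; apply continuous_of_ex_derive, Hb_deriv).
  assert (Hosc : forall x y, v x - v y <= alpha * L).
  { intros x y. rewrite <- Hb_int.
    exact (riccati_oscillation L lam mu b v HL Hv_per Hb_nonneg Hv Hb_per Hb_cont x y). }
  apply (ratio_le_exp_of_log_derivative_ge L (alpha * L) psi HL Hper Hpos Hd1).
  - apply Rmult_le_pos; lra.
  - exact (log_derivative_ge_of_oscillation L (alpha * L) psi HL Hper Hd1 Hosc).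
Qed.
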